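(* Let $\mathcal{X}, \mathcal{T} \in M_{2^k}(R)$ be two Suslin matrices with $\mathcal{X}\overline{\mathcal{X}} =0$, and let $\mathcal{S} = \begin{pmatrix} a & \mathcal{T}\\ -\overline{\mathcal{T}} & b \end{pmatrix}$. Then \[\begin{pmatrix} 1 & \mathcal{X}\\ 0 & 1 \end{pmatrix} \mathcal{S} \begin{pmatrix} 1 & 0\\ -\overline{\mathcal{X}} & 1 \end{pmatrix} = \begin{pmatrix} a - \langle \mathcal{X},\mathcal{T}\rangle & \mathcal{T} + b\mathcal{X}\\ -\overline{\mathcal{T}} - b\overline{\mathcal{X}} & b \end{pmatrix},\] \[\begin{pmatrix} 1 & 0\\ -\overline{\mathcal{X}} & 1 \end{pmatrix} \mathcal{S} \begin{pmatrix} 1 & \mathcal{X} \\ 0 & 1 \end{pmatrix} = \begin{pmatrix} a & \mathcal{T} + a\mathcal{X}\\ -\overline{\mathcal{T}} -a\overline{\mathcal{X}} & b - \langle \mathcal{X},\mathcal{T}\rangle \end{pmatrix}.\]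
   Context: $R$ is a commutative ring, $a,b\in R$. Suslin matrices $\mathcal{S}_{m}(v,w)$ (size $2^m$) for $v=(a_1,\dots,a_{m+1}),w=(b_1,\dots,b_{m+1})\in R^{m+1}$ are defined recursively by $\mathcal{S}_1(v,w)=\begin{pmatrix} a_1 & a_2\\ -b_2 & b_1\end{pmatrix}$, $\overline{\mathcal{S}_1(v,w)}=\begin{pmatrix} b_1 & -a_2\\ b_2 & a_1\end{pmatrix}$, and $\mathcal{S}_{m}(v,w)=\begin{pmatrix} a_1 & \mathcal{S}_{m-1}(v',w')\\ -\overline{\mathcal{S}_{m-1}(v',w')} & b_1\end{pmatrix}$, $\overline{\mathcal{S}_{m}(v,w)}=\begin{pmatrix} b_1 & -\mathcal{S}_{m-1}(v',w')\\ \overline{\mathcal{S}_{m-1}(v',w')} & a_1\end{pmatrix}$ where $v=(a_1,v')$, $w=(b_1,w')$. They satisfy $\mathcal{S}\overline{\mathcal{S}}=\overline{\mathcal{S}}\mathcal{S}=(v\cdot w^\intercal)I$. The bilinear form is $\langle \mathcal{S}_1,\mathcal{S}_2\rangle = \mathcal{S}_1\overline{\mathcal{S}_2}+\mathcal{S}_2\overline{\mathcal{S}_1}$ (a scalar). *)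

From HB Require Import structures.
From mathcomp Require Import all_boot all_order all_algebra.
Set Implicit Arguments. Unset Strict Implicit. Unset Printing Implicit Defensive.
Import GRing.Theory.
Local Open Scope ring_scope.

(* Convention: [suslin m v w] is the paper's S_{m+1}(v,w),
   a matrix of size 2^(m+1), for v, w in R^(m+2).  [suslin_bar m v w] is its
   "bar" companion, defined simultaneously by the paper's recursion. *)

Section Suslin.
Variable R : comPzRingType.

Definition rtail n (v : 'rV[R]_n.+1) : 'rV[R]_n := \row_i v 0 (lift ord0 i).

Lemma expS_addn (m : nat) : (2 ^ m.+2 = 2 ^ m.+1 + 2 ^ m.+1)%N.
Proof. by rewrite [(2 ^ m.+2)%N]expnS mul2n -addnn. Qed.

Fixpoint suslin_pair (m : nat) :
  'rV[R]_(m.+2) -> 'rV[R]_(m.+2) -> 'M[R]_(2 ^ m.+1) * 'M[R]_(2 ^ m.+1) :=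
  match m return 'rV[R]_(m.+2) -> 'rV[R]_(m.+2) ->
                 'M[R]_(2 ^ m.+1) * 'M[R]_(2 ^ m.+1) with
  | 0 => fun v w =>
      ((\matrix_(i < 2, j < 2)
          if i == ord0 then (if j == ord0 then v 0 ord0 else v 0 ord_max)
          else (if j == ord0 then - w 0 ord_max else w 0 ord0)) : 'M_(2 ^ 1),
       (\matrix_(i < 2, j < 2)
          if i == ord0 then (if j == ord0 then w 0 ord0 else - v 0 ord_max)
          else (if j == ord0 then w 0 ord_max else v 0 ord0)) : 'M_(2 ^ 1))
  | m'.+1 => fun v w =>
      let p := @suslin_pair m' (rtail v) (rtail w) in
      let e := expS_addn m' in
      (castmx (esym e, esym e)
         (block_mx (v 0 ord0)%:M p.1 (- p.2) (w 0 ord0)%:M),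
       castmx (esym e, esym e)
         (block_mx (w 0 ord0)%:M (- p.1) p.2 (v 0 ord0)%:M))
  end.

Definition suslin m (v w : 'rV[R]_(m.+2)) := (@suslin_pair m v w).1.
Definition suslin_bar m (v w : 'rV[R]_(m.+2)) := (@suslin_pair m v w).2.

Definition suslin_form (m : nat) (v1 w1 v2 w2 : 'rV[R]_(m.+2)) : 'M[R]_(2 ^ m.+1) :=
  @suslin m v1 w1 *m @suslin_bar m v2 w2 + @suslin m v2 w2 *m @suslin_bar m v1 w1.

End Suslin.
Arguments suslin {R} m v w.
Arguments suslin_bar {R} m v w.
Arguments suslin_form {R} m v1 w1 v2 w2.

From HB Require Import structures.
From mathcomp Require Import all_boot all_order all_algebra.
From mathcomp Require Import ring.
Import GRing.Theory.
Set Implicit Arguments.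
Unset Strict Implicit.
Unset Printing Implicit Defensive.
Local Open Scope ring_scope.

(* S Sbar = Sbar S = (v.w) I follows by induction from the block recursion.
   Since S and Sbar are additive in (v, w), polarizing this identity gives
   <S1, S2> = (v1.w2 + v2.w1) I = Sbar1 S2 + Sbar2 S1.  In particular
   X Xbar = 0 forces Xbar X = 0, and the theorem is then a direct block
   computation. *)

Section Suslin.
Variable R : comPzRingType.

Lemma castmx_mul n n' (e : n = n') (A B : 'M[R]_n) :
  castmx (e, e) (A *m B) = castmx (e, e) A *m castmx (e, e) B.
Proof. by case: n' / e; rewrite !castmx_id. Qed.

Lemma castmx_add n n' (e : n = n') (A B : 'M[R]_n) :
  castmx (e, e) (A + B) = castmx (e, e) A + castmx (e, e) B.
Proof. by case: n' / e; rewrite !castmx_id. Qed.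

Lemma castmx_scalar n n' (e : n = n') (c : R) :
  castmx (e, e) (c%:M : 'M_n) = c%:M.
Proof. by case: n' / e; rewrite castmx_id. Qed.

Lemma suslinS m (v w : 'rV[R]_m.+3) :
  let e := esym (expS_addn m) in
  suslin m.+1 v w =
    castmx (e, e) (block_mx (v 0 ord0)%:M (suslin m (rtail v) (rtail w))
                            (- suslin_bar m (rtail v) (rtail w)) (w 0 ord0)%:M).
Proof. by []. Qed.

Lemma suslin_barS m (v w : 'rV[R]_m.+3) :
  let e := esym (expS_addn m) in
  suslin_bar m.+1 v w =
    castmx (e, e) (block_mx (w 0 ord0)%:M (- suslin m (rtail v) (rtail w))
                            (suslin_bar m (rtail v) (rtail w)) (v 0 ord0)%:M).
Proof. by []. Qed.

Lemma rtailD n (v v' : 'rV[R]_n.+1) : rtail (v + v') = rtail v + rtail v'.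
Proof. by apply/rowP => i; rewrite !mxE. Qed.

Definition vdot n (v w : 'rV[R]_n) := \sum_i v 0 i * w 0 i.

Lemma vdotS n (v w : 'rV[R]_n.+1) :
  vdot v w = v 0 ord0 * w 0 ord0 + vdot (rtail v) (rtail w).
Proof.
by rewrite /vdot big_ord_recl; congr (_ + _); apply: eq_bigr => i _; rewrite !mxE.
Qed.

Lemma vdotDl n (v v' w : 'rV[R]_n) : vdot (v + v') w = vdot v w + vdot v' w.
Proof. by rewrite /vdot -big_split; apply: eq_bigr => i _; rewrite mxE mulrDl. Qed.

Lemma vdotDr n (v w w' : 'rV[R]_n) : vdot v (w + w') = vdot v w + vdot v w'.
Proof. by rewrite /vdot -big_split; apply: eq_bigr => i _; rewrite mxE mulrDr. Qed.

Lemma mul_suslin_block n (a b c : R) (P Q : 'M[R]_n) :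
  P *m Q = c%:M -> Q *m P = c%:M ->
  block_mx a%:M P (- Q) b%:M *m block_mx b%:M (- P) Q a%:M = (a * b + c)%:M.
Proof.
move=> PQ QP; rewrite mulmx_block scalar_mx_block !mulNmx !mulmxN opprK PQ QP.
rewrite !mul_scalar_mx !mul_mx_scalar !scale_scalar_mx !addNr.
by rewrite [c%:M + _]addrC [b * a]mulrC -raddfD.
Qed.

Lemma suslin_mul_bar m (v w : 'rV[R]_m.+2) :
  suslin m v w *m suslin_bar m v w = (vdot v w)%:M /\
  suslin_bar m v w *m suslin m v w = (vdot v w)%:M.
Proof.
elim: m v w => [|m IH] v w.
  have last2 (u : 'rV[R]_2) : u 0 (lift ord0 ord0) = u 0 ord_max.
    by congr (u 0 _); apply/val_inj.
  rewrite /suslin /suslin_bar /vdot /=.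
  split; apply/matrixP => i j; rewrite !mxE !big_ord_recl !big_ord0 !mxE !last2;
    case: i => [[|[|i]] ?] //; case: j => [[|[|j]] ?] //=; ring.
have [PQ QP] := IH (rtail v) (rtail w).
rewrite suslinS suslin_barS -!castmx_mul vdotS.
split; rewrite -(castmx_scalar (esym (expS_addn m))); congr castmx.
  exact: mul_suslin_block.
(* Sbar is the Suslin block of (b, -P, -Q, a) when S is that of (a, P, Q, b). *)
have := mul_suslin_block (w 0 ord0) (v 0 ord0) (P := - suslin m (rtail v) (rtail w))
  (Q := - suslin_bar m (rtail v) (rtail w)).
by rewrite !mulmxN !mulNmx !opprK mulrC; apply.
Qed.

Lemma suslinD m (v v' w w' : 'rV[R]_m.+2) :
  suslin m (v + v') (w + w') = suslin m v w + suslin m v' w' /\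
  suslin_bar m (v + v') (w + w') = suslin_bar m v w + suslin_bar m v' w'.
Proof.
elim: m v v' w w' => [|m IH] v v' w w'.
  by rewrite /suslin /suslin_bar /=; split; apply/matrixP => i j; rewrite !mxE;
    case: ifP => _; case: ifP => _; rewrite ?mxE ?opprD.
have [IHs IHb] := IH (rtail v) (rtail v') (rtail w) (rtail w').
rewrite !suslinS !suslin_barS !rtailD IHs IHb -!castmx_add !add_block_mx.
by rewrite !mxE -!raddfD /= !opprD.
Qed.

Lemma suslin_mul_bar_polar m (v1 w1 v2 w2 : 'rV[R]_m.+2) :
  let d := vdot v1 w2 + vdot v2 w1 in
  suslin m v1 w1 *m suslin_bar m v2 w2 + suslin m v2 w2 *m suslin_bar m v1 w1
    = d%:M /\
  suslin_bar m v1 w1 *m suslin m v2 w2 + suslin_bar m v2 w2 *m suslin m v1 w1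
    = d%:M.
Proof.
have [S12 Sb12] := suslin_mul_bar (v1 + v2) (w1 + w2).
have [S1 Sb1] := suslin_mul_bar v1 w1; have [S2 Sb2] := suslin_mul_bar v2 w2.
have [Ds Db] := suslinD v1 v2 w1 w2.
rewrite /= raddfD; split; [move: S12 | move: Sb12];
  rewrite Ds Db !mulmxDl !mulmxDr ?S1 ?S2 ?Sb1 ?Sb2 !vdotDl !vdotDr !raddfD /=;
  move=> E; apply: (@addrI _ ((vdot v1 w1)%:M + (vdot v2 w2)%:M));
  by rewrite [LHS]addrACA [RHS]addrACA !(addrC (vdot v2 w2)%:M).
Qed.

Lemma mul_unitri_block_ul n (a b : R) (X Xb T Tb : 'M[R]_n) :
  X *m Xb = 0 ->
  block_mx 1%:M X 0 1%:M *m block_mx a%:M T (- Tb) b%:M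
    *m block_mx 1%:M 0 (- Xb) 1%:M =
  block_mx (a%:M - (X *m Tb + T *m Xb)) (T + b *: X) (- Tb - b *: Xb) b%:M.
Proof.
move=> XXb; rewrite !mulmx_block !(mul1mx, mulmx1, mul0mx, mulmx0, add0r, addr0).
rewrite !mulmxDl !mulmxN !mul_mx_scalar !mul_scalar_mx -scalemxAl XXb scaler0.
by rewrite subr0 opprD addrA.
Qed.

Lemma mul_unitri_block_lu n (a b : R) (X Xb T Tb : 'M[R]_n) :
  Xb *m X = 0 ->
  block_mx 1%:M 0 (- Xb) 1%:M *m block_mx a%:M T (- Tb) b%:M
    *m block_mx 1%:M X 0 1%:M =
  block_mx a%:M (T + a *: X) (- Tb - a *: Xb) (b%:M - (Xb *m T + Tb *m X)).
Proof.
move=> XbX; rewrite !mulmx_block !(mul1mx, mulmx1, mul0mx, mulmx0, add0r, addr0).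
rewrite !mulmxDl !mulNmx !mul_mx_scalar !mul_scalar_mx -scalemxAl XbX scaler0 oppr0 sub0r.
congr block_mx; [exact: addrC | exact: addrC |].
by rewrite addrCA addrA addrC -opprD.
Qed.

End Suslin.

Theorem lemma3p3 (R : comPzRingType) (m : nat) (vx wx vt wt : 'rV[R]_(m.+2))
    (a b : R) :
  let X := suslin m vx wx in let Xb := suslin_bar m vx wx in
  let T := suslin m vt wt in let Tb := suslin_bar m vt wt in
  let S := block_mx a%:M T (- Tb) b%:M in
  X *m Xb = 0 ->
  block_mx 1%:M X 0 1%:M *m S *m block_mx 1%:M 0 (- Xb) 1%:M =
    block_mx (a%:M - suslin_form m vx wx vt wt) (T + b *: X)
             (- Tb - b *: Xb) b%:M
  /\
  block_mx 1%:M 0 (- Xb) 1%:M *m S *m block_mx 1%:M X 0 1%:M =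
    block_mx a%:M (T + a *: X) (- Tb - a *: Xb)
             (b%:M - suslin_form m vx wx vt wt).
Proof.
move=> X Xb T Tb S XXb; split; first exact: mul_unitri_block_ul.
have XbX : Xb *m X = 0.
  have [XXb_vdot XbX_vdot] := suslin_mul_bar vx wx.
  by rewrite /Xb /X XbX_vdot -XXb_vdot.
have [form_vdot form_bar_vdot] := suslin_mul_bar_polar vx wx vt wt.
by rewrite /suslin_form form_vdot -form_bar_vdot; apply: mul_unitri_block_lu.
Qed.
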